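(* Let $k\hookrightarrow K$ be a finite field extension, $V$ a $K$-vector space and $\varphi\in\mathrm{End}_K(V)$ finite potent such that $1+\varphi$ is invertible. Then $$\operatorname{Det}^k_V(1+\varphi)=N_{K/k}\big[\operatorname{Det}^K_V(1+\varphi)\big],$$ where $N_{K/k}\colon K^\times\to k^\times$ is the norm of the extension and $V$ is regarded as a $k$-vector space on the left-hand side.
   Context: An endomorphism $\varphi$ of a vector space $U$ over a field $F$ is finite potent if $\varphi^nU$ is finite dimensional for some $n$; then $\operatorname{Det}^F_U(1+\varphi)$ is the ordinary determinant over $F$ of $1+\varphi$ restricted to any finite-dimensional $\varphi$-invariant $F$-subspace $W$ with $\varphi^nU\subseteq W$ for some $n$. *)

From HB Require Import structures.
From mathcomp Require Import all_boot all_order all_algebra all_field.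
From Stdlib Require Import ClassicalEpsilon.
Set Implicit Arguments.
Unset Strict Implicit.
Unset Printing Implicit Defensive.
Import GRing.Theory.
Local Open Scope ring_scope.

(* Generic setting: an additive group V with a scalar action sc of a field F
   (sc is the F-vector-space structure under consideration). *)
Section Generic.
Variables (F : fieldType) (V : zmodType) (sc : F -> V -> V).

Definition in_span n (b : 'I_n -> V) (v : V) : Prop :=
  exists c : 'I_n -> F, v = \sum_(i < n) sc (c i) (b i).

Definition free_fam n (b : 'I_n -> V) : Prop :=
  forall c : 'I_n -> F, \sum_(i < n) sc (c i) (b i) = 0 -> forall i, c i = 0.

(* phi is finite potent: phi^m V is a finite-dimensional F-subspace, i.e.
   it is spanned by finitely many of its own elements. *)
Definition finite_potent (phi : V -> V) : Prop :=
  exists m n (s : 'I_n -> V),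
    (forall i, exists u, s i = iter m phi u) /\
    (forall u, in_span s (iter m phi u)).

(* Admissible data for computing Det^F_V(1+phi): a basis b of a
   finite-dimensional phi-invariant subspace W = span b with phi^m V <= W,
   and the matrix M of phi|_W in that basis (column j = coordinates of
   phi (b j)). *)
Definition det_data (phi : V -> V) (x : {n : nat & ('I_n -> V) * 'M[F]_n}) : Prop :=
  let b := (projT2 x).1 in let M := (projT2 x).2 in
  free_fam b /\
  (exists m, forall u, in_span b (iter m phi u)) /\
  (forall j, phi (b j) = \sum_i sc (M i j) (b i)).

Definition det_data_inh : inhabited {n : nat & ('I_n -> V) * 'M[F]_n} :=
  inhabits (existT _ 0%N ((fun _ => 0), 0)).

(* Det^F_V(1 + phi): the ordinary determinant over F of (1+phi) restricted
   to any such W (well defined by the paper; here a choice is made). *)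
Definition Det1p (phi : V -> V) : F :=
  let x := epsilon det_data_inh (det_data phi) in \det (1%:M + (projT2 x).2).

End Generic.

(* Norm N_{K/k}(a) of a finite field extension K/k: the determinant of the
   k-linear map x |-> a x on K. *)
Definition normK (k : fieldType) (K : fieldExtType k) (a : K) : k :=
  \det (\matrix_(i, j) coord (vbasis {:K}) i (a * tnth (vbasis {:K}) j)).

Definition res_scale (k : fieldType) (K : fieldExtType k) (V : lmodType K)
  (a : k) (v : V) : V := (a%:A : K) *: v.

From HB Require Import structures.
From mathcomp Require Import all_boot all_order all_algebra all_field.
From Stdlib Require Import ClassicalEpsilon Classical.
Set Implicit Arguments.
Unset Strict Implicit.
Unset Printing Implicit Defensive.
Import GRing.Theory.
Local Open Scope ring_scope.

(* Compute both determinants on one phi-invariant K-subspace W with K-basis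
   b_1, ..., b_n containing phi^m V; this is legitimate because det(1 + T)
   of an endomorphism T equals det(1 + T|_W) for any T-stable W containing
   the image of some T^q, T being nilpotent on the quotient.  Over k, the
   vectors e_t b_i (e a k-basis of K) form a basis of W in which the matrix
   of phi|_W is obtained from its K-matrix M by replacing every entry a by
   the matrix of x |-> a x.  So the theorem reduces to
   det_k (resmx A) = N_{K/k} (det_K A) for square matrices A over K, which
   follows by induction on the size: eliminate the first column with a
   pivot and compare Schur complements on both sides. *)

Lemma det_castmx (R : comPzRingType) m n (e : m = n) (A : 'M[R]_m) :
  \det (castmx (e, e) A) = \det A.
Proof. by case: n / e; rewrite castmx_id. Qed.

Section FieldMatrices.
Variable F : fieldType.

(* [\det (1 + 'X N)] is a unit of [{poly F}], hence constant. *)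
Lemma det1D_nilpotent n (N : 'M[F]_n) q : N ^+ q = 0 -> \det (1 + N) = 1.
Proof.
move=> Nq.
pose NX : 'M[{poly F}]_n := 'X *: map_mx polyC N.
have NXq : NX ^+ q = 0.
  suff -> : NX ^+ q = 'X ^+ q *: map_mx polyC (N ^+ q) by rewrite Nq map_mx0 scaler0.
  elim: q {Nq} => [|q IH]; first by rewrite !expr0 map_mx1 scale1r.
  rewrite exprS IH /NX [in RHS]exprS -mulmxE.
  by rewrite -scalemxAl -scalemxAr scalerA exprS -map_mxM.
have : (1 + NX) \in unitmx.
  have geom := subrX1 (- NX) q.
  rewrite exprNn NXq mulr0 sub0r -opprD mulNr in geom.
  have /mulmx1_unit[] // : (1 + NX) *m (\sum_(i < q) (- NX) ^+ i) = 1%:M.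
  by apply: oppr_inj; rewrite [RHS]geom addrC.
rewrite unitmxE poly_unitE => /andP[/size_poly1P[c _ detc] _].
have det_scale x : \det (1 + x *: N) = c.
  have := det_map_mx (horner_eval x) (1 + NX).
  rewrite detc /= horner_evalE hornerC => <-; congr (\det _).
  apply/matrixP => i j; rewrite !mxE /= horner_evalE !hornerE.
  by case: (i == j); rewrite ?hornerC.
by rewrite -(scale1r N) det_scale -(det_scale 0) scale0r addr0 det1.
Qed.

Lemma det1D_tr n (M : 'M[F]_n) : \det (1 + M^T) = \det (1 + M).
Proof. by rewrite -det_tr linearD /= trmx1 trmxK. Qed.

Lemma exp_lblock_mx r s (B : 'M[F]_r) (X : 'M[F]_(s, r)) (Y : 'M[F]_s) q :
  exists X', (block_mx B 0 X Y : 'M_(r + s)) ^+ q = block_mx (B ^+ q) 0 X' (Y ^+ q).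
Proof.
elim: q => [|q [X' IH]]; first by exists 0; rewrite !expr0 -scalar_mx_block.
exists (X *m B ^+ q + Y *m X'); rewrite exprS IH -mulmxE mulmx_block.
by rewrite !mulmx0 !mul0mx !addr0 !add0r !mulmxE -!exprS.
Qed.

Lemma det_block_schur n1 n2 (Aul : 'M[F]_n1) Aur Adl (Adr : 'M_n2) :
  Aul \in unitmx ->
  \det (block_mx Aul Aur Adl Adr) = \det Aul * \det (Adr - Adl *m invmx Aul *m Aur).
Proof.
move=> Aul_unit.
have -> : block_mx Aul Aur Adl Adr = block_mx 1%:M 0 (Adl *m invmx Aul) 1%:M *m
    block_mx Aul Aur 0 (Adr - Adl *m invmx Aul *m Aur).
  rewrite mulmx_block !mul1mx !mul0mx ?mulmx0 ?addr0 ?add0r mulmxKV //.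
  by rewrite addrC subrK.
by rewrite det_mulmx det_lblock det_ublock !det1 !mul1r.
Qed.

(* In a basis extending that of the row space of [C], the matrix of [T] is
   lower block triangular with diagonal blocks [B] and a nilpotent [Y]. *)
Lemma det1D_conj_lblock r s (T : 'M[F]_(r + s)) (C : 'M_(r, r + s))
    (E : 'M_(s, r + s)) (B : 'M_r) q :
  col_mx C E \in unitmx -> C *m T = B *m C -> (T ^+ q <= C)%MS ->
  \det (1 + T) = \det (1 + B).
Proof.
set P := col_mx C E => P_unit CT Tq.
have CP : C *m invmx P = row_mx 1%:M 0.
  have -> : C = row_mx 1%:M 0 *m P by rewrite mul_row_col mul1mx mul0mx addr0.
  by rewrite mulmxK.
pose X := lsubmx (E *m T *m invmx P); pose Y := rsubmx (E *m T *m invmx P).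
have PTP : P *m T *m invmx P = block_mx B 0 X Y.
  rewrite /P mul_col_mx mul_col_mx CT -mulmxA CP mul_mx_row mulmx1 mulmx0.
  by rewrite block_mxEv hsubmxK.
have PTPq : (P *m T *m invmx P) ^+ q = P *m T ^+ q *m invmx P.
  elim: (q) => [|q' IH]; first by rewrite !expr0 mulmx1 mulmxV.
  by rewrite exprS IH -mulmxE !mulmxA mulmxKV // exprS -mulmxE !mulmxA.
have Yq : Y ^+ q = 0.
  have [X' PTPq_block] := exp_lblock_mx B X Y q.
  move: PTPq; rewrite PTP PTPq_block; move/submxP: Tq => [W ->].
  rewrite -!mulmxA CP mul_mx_row mulmx1 mulmx0 mul_mx_row mulmx0.
  move/(congr1 drsubmx); rewrite block_mxKdr => ->.
  by apply/matrixP => i j; rewrite !mxE (unsplitK (inr _ j)) mxE.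
have -> : \det (1 + T) = \det (1 + P *m T *m invmx P).
  have -> : 1 + P *m T *m invmx P = P *m (1 + T) *m invmx P.
    by rewrite mulmxDr mulmxDl mulmx1 mulmxV.
  by rewrite !det_mulmx det_inv mulrC mulrA mulVr ?mul1r.
rewrite PTP [1]scalar_mx_block add_block_mx addr0 det_lblock.
by rewrite (det1D_nilpotent Yq) mulr1.
Qed.

Lemma det1D_stable_rowspace n r (T : 'M[F]_n) (C : 'M_(r, n)) (B : 'M_r) q :
  row_free C -> C *m T = B *m C -> (T ^+ q <= C)%MS ->
  \det (1 + T) = \det (1 + B).
Proof.
move=> C_free; have le_rn : (r <= n)%N by rewrite -(eqP C_free) rank_leq_col.
move: T C C_free; rewrite -(subnKC le_rn) => T C C_free.
have rank_compl : \rank (C^C)%MS = (n - r)%N by rewrite mxrank_compl (eqP C_free) addKn.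
pose E := castmx (rank_compl, erefl) (row_base (C^C)%MS).
apply: (det1D_conj_lblock (E := E)).
rewrite -row_full_unit /row_full -addsmxE.
have -> : (\rank (C + E) = \rank (C + C^C))%MS.
  apply/eqmx_rank/eqmxP; apply: adds_eqmx => //.
  exact: eqmx_trans (eqmx_cast _ _) (eq_row_base _).
exact: addsmx_compl_full.
Qed.

Lemma pivot_transvection n (A : 'M[F]_n.+1) :
  \det A != 0 -> exists E : 'M_n.+1, [/\ \det E = 1, E 0 0 = 1 & (E *m A) 0 0 != 0].
Proof.
move=> detA_neq0; have [/eqP A00 | A00] := boolP (A 0 0 == 0); last first.
  by exists 1%:M; rewrite det1 mul1mx mxE eqxx.
have /existsP[i Ai0] : [exists i, A i 0 != 0].
  apply: contraR detA_neq0; rewrite negb_exists => /forallP A_0.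
  rewrite (expand_det_col _ 0) big1 // => j _.
  by move/negPn/eqP: (A_0 j) => ->; rewrite mul0r.
have i_neq0 : ord0 != i by apply: contraNneq Ai0 => <-; rewrite A00.
exists (1%:M + delta_mx 0 i); split.
- apply: (det1D_nilpotent (q := 2)).
  by rewrite expr2 -mulmxE mul_delta_mx_0 // eq_sym.
- by rewrite !mxE eqxx (negbTE i_neq0) addr0.
rewrite mulmxDl mul1mx mxE A00 add0r mxE (bigD1 i) //= !mxE !eqxx mul1r big1 ?addr0 //.
by move=> j /negbTE ji; rewrite !mxE ji mul0r.
Qed.

Definition schur_pivot n (B : 'M[F]_n.+1) : 'M[F]_n :=
  \matrix_(i, j) (B (lift 0 i) (lift 0 j) - B (lift 0 i) 0 * (B 0 0)^-1 * B 0 (lift 0 j)).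

Lemma det_schur_pivot n (B : 'M[F]_n.+1) :
  B 0 0 != 0 -> \det B = B 0 0 * \det (schur_pivot B).
Proof.
move=> B00; have lshift0 : lshift n (ord0 : 'I_1) = ord0 by apply: val_inj.
have rshift1 (i : 'I_n) : rshift 1 i = lift ord0 i by apply: val_inj.
have ulB : @ulsubmx _ 1 n 1 n B = (B 0 0)%:M.
  by apply/matrixP => i j; rewrite !mxE !ord1 lshift0.
have := @det_block_schur 1 n (@ulsubmx _ 1 n 1 n B) (@ursubmx _ 1 n 1 n B)
  (@dlsubmx _ 1 n 1 n B) (@drsubmx _ 1 n 1 n B).
rewrite submxK => ->; last by rewrite ulB unitmxE det_scalar expr1 unitfE.
rewrite ulB invmx_scalar det_scalar expr1; congr (_ * \det _).
by apply/matrixP => i j; rewrite !(mxE, big_ord1) !rshift1 !lshift0 eqxx mulr1n.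
Qed.

End FieldMatrices.

Section Spans.
Variables (F : fieldType) (V : lmodType F) (phi : V -> V).
Hypothesis phiD : {morph phi : u v / u + v}.
Hypothesis phiZ : forall (a : F) u, phi (a *: u) = a *: phi u.

Local Notation sc := (fun (a : F) (v : V) => a *: v).

Definition lincomb n (b : 'I_n -> V) (x : 'rV[F]_n) : V := \sum_i x 0 i *: b i.

Lemma in_spanP n (b : 'I_n -> V) v : in_span sc b v <-> exists x, v = lincomb b x.
Proof.
split=> [[c ->] | [x ->]]; last by exists (x 0).
by exists (\row_i c i); apply: eq_bigr => i _; rewrite mxE.
Qed.

Lemma lincomb0 n (b : 'I_n -> V) : lincomb b 0 = 0.
Proof. by rewrite /lincomb big1 // => i _; rewrite mxE scale0r. Qed.

Lemma lincombB n (b : 'I_n -> V) x y : lincomb b (x - y) = lincomb b x - lincomb b y.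
Proof. by rewrite /lincomb -sumrB; apply: eq_bigr => i _; rewrite !mxE scalerBl. Qed.

Lemma lincomb_row1 n (b : 'I_n -> V) i : lincomb b (row i 1%:M) = b i.
Proof.
rewrite /lincomb (bigD1 i) //= big1 => [|j /negbTE ji].
  by rewrite !mxE eqxx scale1r addr0.
by rewrite !mxE eq_sym ji scale0r.
Qed.

Lemma free_famP n (b : 'I_n -> V) :
  free_fam sc b <-> forall x, lincomb b x = 0 -> x = 0.
Proof.
split=> [b_free x bx0 | b_inj c bc0 i].
  by apply/rowP => i; rewrite mxE (b_free (x 0)) // ord1.
have /rowP/(_ i) : \row_j c j = 0.
  by apply: b_inj; rewrite -[RHS]bc0; apply: eq_bigr => j _; rewrite mxE.
by rewrite !mxE.
Qed.

Lemma lincomb_inj n (b : 'I_n -> V) : free_fam sc b -> injective (lincomb b).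
Proof.
move/free_famP=> b_free x y bxy; apply/eqP; rewrite -subr_eq0; apply/eqP.
by apply: b_free; rewrite lincombB bxy subrr.
Qed.

Lemma lincomb_mulmx n r (b : 'I_n -> V) (c : 'I_r -> V) (C : 'M[F]_(r, n)) x :
  (forall j, c j = lincomb b (row j C)) -> lincomb c x = lincomb b (x *m C).
Proof.
move=> cC; rewrite /lincomb; under eq_bigr => j _ do rewrite cC /lincomb scaler_sumr.
rewrite exchange_big /=; apply: eq_bigr => i _; rewrite mxE scaler_suml.
by apply: eq_bigr => j _; rewrite scalerA !mxE.
Qed.

Lemma phi0 : phi 0 = 0.
Proof. by rewrite -(scale0r 0) phiZ !scale0r. Qed.

Lemma phi_lincomb n (b : 'I_n -> V) x :
  phi (lincomb b x) = lincomb (fun i => phi (b i)) x.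
Proof.
rewrite /lincomb (big_morph phi phiD phi0).
by apply: eq_bigr => i _; rewrite phiZ.
Qed.

Lemma iter_phi_lincomb m n (b : 'I_n -> V) x :
  iter m phi (lincomb b x) = lincomb (fun i => iter m phi (b i)) x.
Proof. by elim: m => //= m ->; rewrite phi_lincomb. Qed.

Section StableFamily.
Variables (n : nat) (b : 'I_n -> V) (M : 'M[F]_n).
Hypothesis phi_b : forall j, phi (b j) = lincomb b (row j M).

Lemma phi_lincomb_mx x : phi (lincomb b x) = lincomb b (x *m M).
Proof. by rewrite phi_lincomb; apply: lincomb_mulmx. Qed.

Lemma iter_phi_lincomb_mx q x : iter q phi (lincomb b x) = lincomb b (x *m M ^+ q).
Proof.
elim: q => [|q /= ->]; first by rewrite expr0 mulmx1.
by rewrite phi_lincomb_mx exprSr -mulmxE mulmxA.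
Qed.

Lemma iter_phi_row q i : iter q phi (b i) = lincomb b (row i (M ^+ q)).
Proof. by rewrite -lincomb_row1 iter_phi_lincomb_mx -row_mul mul1mx. Qed.

End StableFamily.

Lemma in_span_lincomb n (b : 'I_n -> V) x : in_span sc b (lincomb b x).
Proof. by apply/in_spanP; exists x. Qed.

Lemma in_span_gen n (b : 'I_n -> V) i : in_span sc b (b i).
Proof. by rewrite -lincomb_row1; apply: in_span_lincomb. Qed.

Lemma coef_mx_exists n r (b : 'I_n -> V) (c : 'I_r -> V) :
  (forall j, in_span sc b (c j)) ->
  exists C : 'M[F]_(r, n), forall j, c j = lincomb b (row j C).
Proof.
move=> cb; have [X cX] := fin_all_exists (fun j => iffLR (in_spanP _ _) (cb j)).
exists (\matrix_j X j) => j; rewrite cX; congr lincomb.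
by apply/rowP => i; rewrite !mxE.
Qed.

Lemma in_span_trans n p (b : 'I_n -> V) (g : 'I_p -> V) v :
  (forall i, in_span sc b (g i)) -> in_span sc g v -> in_span sc b v.
Proof.
move=> /coef_mx_exists[G gG] /in_spanP[x ->].
by rewrite (lincomb_mulmx _ gG); apply: in_span_lincomb.
Qed.

Lemma in_span_iter n (b : 'I_n -> V) m v :
  (forall j, in_span sc b (phi (b j))) -> in_span sc b v -> in_span sc b (iter m phi v).
Proof.
move=> /coef_mx_exists[M phi_b] /in_spanP[x ->].
by rewrite (iter_phi_lincomb_mx phi_b); apply: in_span_lincomb.
Qed.

Lemma in_span_dependent p (g : 'I_p.+1 -> V) x i0 :
  lincomb g x = 0 -> x 0 i0 != 0 -> in_span sc (fun j => g (lift i0 j)) (g i0).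
Proof.
move=> gx0 xi0; apply/in_spanP; exists (\row_j (- x 0 (lift i0 j) / x 0 i0)).
apply: (scalerI xi0); move/eqP: gx0; rewrite /lincomb (bigD1_ord i0) //= addr_eq0.
move/eqP=> ->; rewrite scaler_sumr -sumrN; apply: eq_bigr => j _.
by rewrite mxE scalerA mulrCA mulfV // mulr1 scaleNr.
Qed.

Lemma free_subfamily_exists p (g : 'I_p -> V) : exists r (c : 'I_r -> V),
  [/\ free_fam sc c, forall j, in_span sc g (c j) & forall i, in_span sc c (g i)].
Proof.
elim: p g => [|p IH] g.
  exists 0%N, g; split=> [x _|j|i]; [by case | exact: in_span_gen..].
have [g_free | g_dep] := classic (free_fam sc g).
  by exists p.+1, g; split=> // i; apply: in_span_gen.
have [x x_dep] : exists x, ~ (lincomb g x = 0 -> x = 0).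
  by apply: not_all_ex_not => g_indep; apply/g_dep/free_famP.
have [gx0 x_neq0] := imply_to_and _ _ x_dep.
have /existsP[i0 xi0] : [exists i, x 0 i != 0].
  apply: contraR (introN eqP x_neq0); rewrite negb_exists => /forallP x0.
  by apply/eqP/rowP => i; rewrite mxE; apply/eqP/negPn.
have [r [c [c_free cg gc]]] := IH (fun j => g (lift i0 j)).
exists r, c; split=> // [j | i].
  by apply: in_span_trans (cg j) => i; apply: in_span_gen.
have g_i0 := in_span_dependent gx0 xi0.
by case: (unliftP i0 i) => [j ->|->]; [apply: gc | apply: in_span_trans gc g_i0].
Qed.

Lemma det1D_stable_subfamily n r (b : 'I_n -> V) (c : 'I_r -> V)
    (M : 'M[F]_n) (A : 'M[F]_r) q :
  free_fam sc b -> (forall j, phi (b j) = lincomb b (row j M)) ->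
  free_fam sc c -> (forall j, phi (c j) = lincomb c (row j A)) ->
  (forall j, in_span sc b (c j)) -> (forall i, in_span sc c (iter q phi (b i))) ->
  \det (1 + M) = \det (1 + A).
Proof.
move=> b_free phi_b c_free phi_c cb bc.
have [C cC] := coef_mx_exists cb.
apply: (@det1D_stable_rowspace _ _ _ _ C _ q).
- apply: inj_row_free => x xC0; apply: (iffLR (free_famP c) c_free).
  by rewrite (lincomb_mulmx _ cC) xC0 lincomb0.
- apply/row_matrixP => j; apply: (lincomb_inj b_free).
  rewrite !row_mul -(phi_lincomb_mx phi_b) -cC phi_c.
  by rewrite (lincomb_mulmx _ cC).
- apply/row_subP => i; have /in_spanP[w bw] := bc i.
  apply/submxP; exists w; apply: (lincomb_inj b_free).
  by rewrite -(iter_phi_row phi_b) bw (lincomb_mulmx _ cC).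
Qed.

Lemma phi_gen_lincomb_tr n (b : 'I_n -> V) (M : 'M[F]_n) :
  (forall j, phi (b j) = \sum_i M i j *: b i) ->
  forall j, phi (b j) = lincomb b (row j M^T).
Proof. by move=> phi_b j; rewrite phi_b; apply: eq_bigr => i _; rewrite !mxE. Qed.

Lemma in_span_iter_family m n (b : 'I_n -> V) v :
  in_span sc b v -> in_span sc (fun i => iter m phi (b i)) (iter m phi v).
Proof. by move=> /in_spanP[x ->]; rewrite iter_phi_lincomb; apply: in_span_lincomb. Qed.

(* Both determinants equal the one on phi^m2 W1, which lies in W1 and W2. *)
Lemma det_data_det_eq x1 x2 :
  det_data sc phi x1 -> det_data sc phi x2 ->
  \det (1 + (projT2 x1).2) = \det (1 + (projT2 x2).2).
Proof.
case: x1 x2 => n1 [b1 M1] [n2 [b2 M2]].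
case=> /= b1_free [[m1 W1] phi_b1] [/= b2_free [[m2 W2] phi_b2]].
move/phi_gen_lincomb_tr in phi_b1; move/phi_gen_lincomb_tr in phi_b2.
pose g i := iter m2 phi (b1 i).
have [r [c [c_free cg gc]]] := free_subfamily_exists g.
have b1_stable j : in_span sc b1 (phi (b1 j)) by rewrite phi_b1; apply: in_span_lincomb.
have g_b1 i : in_span sc b1 (g i) by apply: in_span_iter b1_stable (in_span_gen _ _).
have [A phi_c] : exists A : 'M_r, forall j, phi (c j) = lincomb c (row j A).
  apply: coef_mx_exists => j; apply: in_span_trans gc _.
  have /in_spanP[x ->] := cg j; rewrite /g -iter_phi_lincomb -iterS iterSr.
  by apply: in_span_iter_family; apply: (in_span_iter 1 b1_stable); apply: in_span_lincomb.
rewrite -det1D_tr -[RHS]det1D_tr.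
rewrite (det1D_stable_subfamily (q := m2) b1_free phi_b1 c_free phi_c) //; last first.
  by move=> j; apply: in_span_trans g_b1 (cg j).
rewrite (det1D_stable_subfamily (q := (m2 + m1)%N) b2_free phi_b2 c_free phi_c) //.
  by move=> j; apply: in_span_trans (cg j) => i; apply: W2.
by move=> i; rewrite iterD; apply: in_span_trans gc (in_span_iter_family _ (W1 _)).
Qed.

Lemma finite_potent_det_data : finite_potent sc phi -> exists x, det_data sc phi x.
Proof.
case=> m [n [s [s_im s_span]]].
have [r [c [c_free cs sc']]] := free_subfamily_exists s.
have [U sU] := fin_all_exists s_im.
have [A phi_c] : exists A : 'M_r, forall j, phi (c j) = lincomb c (row j A).
  apply: coef_mx_exists => j; apply: in_span_trans sc' _.
  have /in_spanP[x ->] := cs j.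
  have -> : lincomb s x = iter m phi (lincomb U x).
    by rewrite iter_phi_lincomb; apply: eq_bigr => i _; rewrite sU.
  by rewrite -iterS iterSr.
exists (existT _ r (c, A^T)); split=> //=; split.
  by exists m => u; apply: in_span_trans sc' _.
by move=> j; rewrite phi_c; apply: eq_bigr => i _; rewrite !mxE.
Qed.

Lemma Det1pE x : det_data sc phi x -> Det1p sc phi = \det (1 + (projT2 x).2).
Proof.
move=> x_data; rewrite /Det1p; apply: det_data_det_eq => //.
by apply: epsilon_spec; exists x.
Qed.

End Spans.

Section RegularRepresentation.
Variables (k : fieldType) (K : fieldExtType k).
Local Notation d := (\dim {:K}).
Local Notation e := (vbasis {:K}).

Definition lmulmx (a : K) : 'M[k]_d := \matrix_(i, j) coord e i (a * tnth e j).

Lemma coord_vbasis_fullv (v : K) : v = \sum_i coord e i v *: tnth e i.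
Proof.
rewrite {1}(coord_vbasis (memvf v)); apply: eq_bigr => i _.
by rewrite (tnth_nth 0).
Qed.

Lemma lmulmxM a b : lmulmx (a * b) = lmulmx a *m lmulmx b.
Proof.
apply/matrixP => i j; rewrite !mxE -mulrA.
rewrite {1}(coord_vbasis_fullv (b * tnth e j)) mulr_sumr linear_sum /=.
by apply: eq_bigr => l _; rewrite !mxE -scalerAr linearZ /= mulrC.
Qed.

Lemma lmulmxD a b : lmulmx (a + b) = lmulmx a + lmulmx b.
Proof. by apply/matrixP => i j; rewrite !mxE mulrDl linearD. Qed.

Lemma lmulmxN a : lmulmx (- a) = - lmulmx a.
Proof. by apply/matrixP => i j; rewrite !mxE mulNr linearN. Qed.

Lemma lmulmx0 : lmulmx 0 = 0.
Proof. by apply/matrixP => i j; rewrite !mxE mul0r linear0. Qed.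

Lemma lmulmx1 : lmulmx 1 = 1%:M.
Proof.
apply/matrixP => i j; rewrite !mxE mul1r (tnth_nth 0) coord_free 1?eq_sym //.
exact: basis_free (vbasisP _).
Qed.

Lemma lmulmx_eq0 a : (lmulmx a == 0) = (a == 0).
Proof.
apply/eqP/eqP => [a0 | ->]; last exact: lmulmx0.
have ae0 j : a * tnth e j = 0.
  rewrite (coord_vbasis_fullv (a * tnth e j)) big1 // => i _.
  by have /matrixP/(_ i j) := a0; rewrite !mxE => ->; rewrite scale0r.
rewrite -[a]mulr1 (coord_vbasis_fullv 1) mulr_sumr big1 // => i _.
by rewrite -scalerAr ae0 scaler0.
Qed.

Lemma normK1 : normK (1 : K) = 1.
Proof. by rewrite /normK -/(lmulmx 1) lmulmx1 det1. Qed.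

Lemma normKM (a b : K) : normK (a * b) = normK a * normK b.
Proof. by rewrite /normK -!/(lmulmx _) lmulmxM det_mulmx. Qed.

Lemma normK0 : normK (0 : K) = 0.
Proof.
rewrite /normK -/(lmulmx 0) lmulmx0 -(scale0r 1%:M) scalemx1 det_scalar expr0n.
by rewrite eqn0Ngt adim_gt0.
Qed.

Definition resmx n (A : 'M[K]_n) : 'M[k]_(\sum_(i < n) d) :=
  \mxblock_(i, j) lmulmx (A i j).

Lemma resmxM n (A B : 'M[K]_n) : resmx (A *m B) = resmx A *m resmx B.
Proof.
rewrite /resmx mul_mxblock; apply: eq_mxblock => i j; rewrite mxE.
rewrite (big_morph lmulmx lmulmxD lmulmx0); apply: eq_bigr => l _.
exact: lmulmxM.
Qed.

Lemma resmxD n (A B : 'M[K]_n) : resmx (A + B) = resmx A + resmx B.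
Proof. by rewrite /resmx -mxblockD; apply: eq_mxblock => i j; rewrite mxE lmulmxD. Qed.

Lemma resmx1 n : resmx (1%:M : 'M[K]_n) = 1%:M.
Proof.
rewrite /resmx -(mxdiagZ 1) /mxdiag; apply: eq_mxblock => i j; rewrite mxE.
by case: (i == j); rewrite ?conform_mx_id ?lmulmx1 ?lmulmx0.
Qed.

Lemma resmx0 n : resmx (0 : 'M[K]_n) = 0.
Proof. by rewrite /resmx -mxblock0; apply: eq_mxblock => i j; rewrite mxE lmulmx0. Qed.

Lemma resmx_eq0 n (A : 'M[K]_n) : (resmx A == 0) = (A == 0).
Proof.
apply/eqP/eqP => [A0 | ->]; last exact: resmx0.
apply/matrixP => i j; rewrite mxE; apply/eqP; rewrite -lmulmx_eq0.
by have := congr1 (fun N => submxblock N i j) A0; rewrite /resmx mxblockK submxblock0 => ->.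
Qed.

Lemma det_resmx_eq0 n (A : 'M[K]_n) : \det A = 0 -> \det (resmx A) = 0.
Proof.
move/eqP/det0P => [v v_neq0 vA0].
pose B : 'M[K]_n := \matrix_(i, j) v 0 j.
have BA0 : B *m A = 0.
  apply/row_matrixP => i; rewrite row_mul row0 -[RHS]vA0; congr (_ *m _).
  by apply/rowP => j; rewrite !mxE.
have resB_neq0 : resmx B != 0.
  rewrite resmx_eq0; apply: contraNneq v_neq0 => B0; apply/eqP/rowP => j.
  by have /matrixP/(_ j j) := B0; rewrite !mxE.
have /existsP[s s_neq0] : [exists s, row s (resmx B) != 0].
  apply: contraR resB_neq0; rewrite negb_exists => /forallP B_0.
  by apply/eqP/row_matrixP => s; rewrite row0; apply/eqP/negPn.
apply/eqP/det0P; exists (row s (resmx B)) => //.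
by rewrite -row_mul -resmxM BA0 resmx0 row0.
Qed.

Lemma lmulmxV a : a != 0 -> lmulmx a *m lmulmx a^-1 = 1%:M.
Proof. by move=> a_neq0; rewrite -lmulmxM mulfV // lmulmx1. Qed.

Lemma invmx_lmulmx a : a != 0 -> invmx (lmulmx a) = lmulmx a^-1.
Proof.
move=> /lmulmxV aVa; have [a_unit _] := mulmx1_unit aVa.
by rewrite -[invmx _]mulmx1 -aVa mulmxA mulVmx // mul1mx.
Qed.

(* The block Schur complement of [lmulmx (B 0 0)] in [resmx B] is
   [resmx (schur_pivot B)]. *)
Lemma det_resmx_pivot n (B : 'M[K]_n.+1) :
  (forall A : 'M[K]_n, \det (resmx A) = normK (\det A)) -> B 0 0 != 0 ->
  \det (resmx B) = normK (\det B).
Proof.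
move=> IH B00; have [B00_unit _] := mulmx1_unit (lmulmxV B00).
rewrite /resmx mxblock_recul det_castmx det_block_schur // invmx_lmulmx //.
rewrite (det_schur_pivot B00) normKM -IH; congr (_ * \det _).
rewrite /resmx mxcol_mul mul_mxcol_mxrow -mxblockB; apply: eq_mxblock => i j.
by rewrite -!lmulmxM -lmulmxN -lmulmxD mxE.
Qed.

Lemma det_resmx n (A : 'M[K]_n) : \det (resmx A) = normK (\det A).
Proof.
elim: n A => [|n IH] A.
  by rewrite det_mx00 normK1; move: (resmx A); rewrite big_ord0; apply: det_mx00.
have [/eqP detA0 | /pivot_transvection[E [detE E00 EA00]]] := boolP (\det A == 0).
  by rewrite detA0 normK0 det_resmx_eq0.
have := det_resmx_pivot IH EA00.
rewrite resmxM !det_mulmx (@det_resmx_pivot _ E) ?E00 ?oner_neq0 //.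
by rewrite detE normK1 !mul1r.
Qed.

End RegularRepresentation.

Section RestrictionOfScalars.
Variables (k : fieldType) (K : fieldExtType k) (V : lmodType K).
Local Notation d := (\dim {:K}).
Local Notation e := (vbasis {:K}).

Definition Vk : Type := V.
HB.instance Definition _ := GRing.Zmodule.on Vk.

Lemma res_scaleA (a b : k) (v : Vk) : res_scale a (res_scale b v) = res_scale (a * b) v.
Proof. by rewrite /res_scale scalerA mulr_algl scalerA. Qed.

Lemma res_scale1 (v : Vk) : res_scale 1 v = v.
Proof. by rewrite /res_scale !scale1r. Qed.

Lemma res_scaleDr (a : k) (u v : Vk) : res_scale a (u + v) = res_scale a u + res_scale a v.
Proof. exact: scalerDr. Qed.

Lemma res_scaleDl (v : Vk) (a b : k) : res_scale (a + b) v = res_scale a v + res_scale b v.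
Proof. by rewrite /res_scale !scalerDl. Qed.

HB.instance Definition _ :=
  GRing.Zmodule_isLmodule.Build k Vk res_scaleA res_scale1 res_scaleDr res_scaleDl.

Local Notation sig1 := (@tagnat.sig1 _ (fun=> d)).
Local Notation sig2 := (@tagnat.sig2 _ (fun=> d)).

Lemma sum_tagnat (R : nmodType) n (G : 'I_n -> 'I_d -> R) :
  \sum_(s < \sum_(i < n) d) G (sig1 s) (sig2 s) = \sum_i \sum_(t < d) G i t.
Proof.
rewrite (sig_big_dep (fun=> true) (fun _ _ => true) G) /=.
by rewrite (reindex _ tagnat.sig_bij_on).
Qed.

Definition prod_basis n (b : 'I_n -> V) (s : 'I_(\sum_(i < n) d)) : Vk :=
  tnth e (sig2 s) *: b (sig1 s).

Lemma sum_prod_basis n (b : 'I_n -> V) (f : 'I_n -> 'I_d -> k) :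
  \sum_s f (sig1 s) (sig2 s) *: prod_basis b s =
  (\sum_i (\sum_t f i t *: tnth e t) *: b i : V).
Proof.
rewrite (sum_tagnat (fun i t => f i t *: (tnth e t *: b i : Vk))).
apply: eq_bigr => i _; rewrite scaler_suml; apply: eq_bigr => t _.
by rewrite /GRing.scale /= /res_scale scalerA mulr_algl.
Qed.

Section ProdBasis.
Variables (n : nat) (b : 'I_n -> V).
Local Notation scK := (fun (a : K) (v : V) => a *: v).
Local Notation sck := (fun (a : k) (v : Vk) => a *: v).

Lemma free_fam_prod_basis : free_fam scK b -> free_fam sck (prod_basis b).
Proof.
move=> b_free c c0 s.
have coef0 : forall i, \sum_(t < d) c (tagnat.Rank i t) *: tnth e t = 0.
  apply: b_free; rewrite -(sum_prod_basis b (fun i t => c (tagnat.Rank i t))) -[RHS]c0.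
  by apply: eq_bigr => s' _; rewrite tagnat.sig2K.
rewrite -(tagnat.sig2K s); move: (coef0 (sig1 s)); under eq_bigr do rewrite (tnth_nth 0).
by move/freeP: (basis_free (vbasisP {:K})) => e_free /e_free ->.
Qed.

Lemma in_span_prod_basis v : in_span scK b v -> in_span sck (prod_basis b) v.
Proof.
case=> x ->; exists (fun s => coord e (sig2 s) (x (sig1 s))).
rewrite (sum_prod_basis b (fun i t => coord e t (x i))); apply: eq_bigr => i _.
by rewrite -coord_vbasis_fullv.
Qed.

Lemma phi_prod_basis (phi : {linear V -> V}) (M : 'M[K]_n) :
  (forall j, phi (b j) = \sum_i M i j *: b i) ->
  forall s, phi (prod_basis b s) = \sum_s' resmx M s' s *: prod_basis b s'.
Proof.
move=> phi_b s; rewrite linearZ /= phi_b scaler_sumr.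
under [RHS]eq_bigr do rewrite mxE.
rewrite (sum_prod_basis b (fun l u => lmulmx (M l (sig1 s)) u (sig2 s))).
apply: eq_bigr => l _; rewrite scalerA mulrC; congr (_ *: _).
by under eq_bigr do rewrite mxE; rewrite -coord_vbasis_fullv.
Qed.

End ProdBasis.

Lemma det_data_resmx (phi : {linear V -> V}) n (b : 'I_n -> V) (M : 'M[K]_n) :
  det_data (fun (a : K) (v : V) => a *: v) phi (existT _ n (b, M)) ->
  det_data (fun (a : k) (v : Vk) => a *: v) phi
    (existT _ (\sum_(i < n) d) (prod_basis b, resmx M)).
Proof.
case=> /= b_free [[m W] phi_b]; split=> /=; first exact: free_fam_prod_basis.
split; last exact: phi_prod_basis.
by exists m => u; apply: in_span_prod_basis.
Qed.

End RestrictionOfScalars.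

Unset Implicit Arguments.

Theorem proposition3p8 (k : fieldType) (K : fieldExtType k) (V : lmodType K)
  (phi : {linear V -> V}) :
  finite_potent (fun (a : K) (v : V) => a *: v) phi ->
  bijective (fun v : V => v + phi v) ->
  Det1p (res_scale (V := V)) phi = normK (Det1p (fun (a : K) (v : V) => a *: v) phi).
Proof.
move=> phi_fp _.
have phiZ (a : K) u : phi (a *: u) = a *: phi u by rewrite linearZ.
have phikZ (a : k) (u : Vk V) : phi (a *: u) = a *: (phi u : Vk V) by rewrite linearZ.
have [[n [b M]] data] := finite_potent_det_data (linearD phi) phiZ phi_fp.
rewrite (Det1pE (linearD phi) phiZ data) -[LHS]/(Det1p _ (phi : Vk V -> Vk V)).
rewrite (@Det1pE k (Vk V) phi (linearD phi) phikZ _ (det_data_resmx data)) /=.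
by rewrite -det_resmx resmxD resmx1.
Qed.
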